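(* Let $w\in S_n$. Then $|R(w)|=|B(w)|\cdot|C(w)|$ if and only if $|B(w)|=1$ or $|C(w)|=1$.
   Context: $S_n$ is generated by the adjacent transpositions $s_1,\dots,s_{n-1}$. A reduced word for $w$ is a word $i_1\cdots i_k$ with $w=s_{i_1}\cdots s_{i_k}$ and $k$ minimal; $R(w)$ is the set of reduced words. A braid move replaces a factor (consecutive letters) $i(i+1)i$ by $(i+1)i(i+1)$ or vice versa; a commutation move replaces a factor $ij$ with $|i-j|>1$ by $ji$. $B(w)$ (resp. $C(w)$) is the set of equivalence classes of $R(w)$ under sequences of braid moves (resp. commutation moves). *)

From Stdlib Require Import ClassicalEpsilon Relations.
From mathcomp Require Import all_boot all_fingroup.
Set Implicit Arguments. Unset Strict Implicit. Unset Printing Implicit Defensive.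

(* We work in S_{n+1} = 'S_n.+1 (permutations of 'I_n.+1 = {0,...,n}).
   Letters are i : 'I_n; the letter i stands for the adjacent transposition
   exchanging i and i+1 (this is s_{i+1} in 1-based notation; the shift is
   harmless since braid/commutation moves only involve differences). *)

Definition adj (n : nat) (i : 'I_n) : 'S_n.+1 :=
  tperm (widen_ord (leqnSn n) i) (lift ord0 i).

Definition prodw (n : nat) (t : seq 'I_n) : 'S_n.+1 :=
  (\prod_(i <- t) adj i)%g.

Definition has_word (n : nat) (w : 'S_n.+1) (k : nat) : Prop :=
  exists t : k.-tuple 'I_n, prodw (tval t) = w.

Definition ell (n : nat) (w : 'S_n.+1) : nat :=
  epsilon (inhabits 0%N)
    (fun k => has_word w k /\ forall j, has_word w j -> (k <= j)%N).

Definition Rw (n : nat) (w : 'S_n.+1) : {set (ell w).-tuple 'I_n} :=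
  [set t | prodw (tval t) == w].

Definition braid_step (x y : seq nat) : Prop :=
  exists (a b : seq nat) (i : nat),
    (x = a ++ [:: i; i.+1; i] ++ b /\ y = a ++ [:: i.+1; i; i.+1] ++ b) \/
    (x = a ++ [:: i.+1; i; i.+1] ++ b /\ y = a ++ [:: i; i.+1; i] ++ b).

Definition comm_step (x y : seq nat) : Prop :=
  exists (a b : seq nat) (i j : nat),
    (i.+1 < j \/ j.+1 < i)%N /\ x = a ++ [:: i; j] ++ b /\ y = a ++ [:: j; i] ++ b.

Definition braid_equiv (x y : seq nat) : Prop := clos_refl_trans _ braid_step x y.
Definition comm_equiv (x y : seq nat) : Prop := clos_refl_trans _ comm_step x y.

Definition pb (P : Prop) : bool :=
  if excluded_middle_informative P then true else false.

Definition classes (n k : nat) (A : {set k.-tuple 'I_n})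
    (r : seq nat -> seq nat -> Prop) : {set {set k.-tuple 'I_n}} :=
  [set [set u in A | pb (r (map val (tval t)) (map val (tval u)))] | t in A].

Definition Bw (n : nat) (w : 'S_n.+1) := classes (Rw w) braid_equiv.
Definition Cw (n : nat) (w : 'S_n.+1) := classes (Rw w) comm_equiv.

From Pilot Require Import Defs.
From Stdlib Require Import Relations ClassicalEpsilon.
From mathcomp Require Import all_boot all_fingroup zify.
Set Implicit Arguments. Unset Strict Implicit. Unset Printing Implicit Defensive.

(* Reading a word letter by letter, each letter i exchanges the values P i and
   P (i+1), where P is the composite of the transpositions read so far; the list
   of these pairs, the trail of the word, determines the word.  A commutation
   move swaps two adjacent disjoint pairs of the trail and a braid move reverses
   three adjacent pairwise overlapping ones.  So the relative order of two
   overlapping pairs is invariant under commutation moves and that of two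
   disjoint pairs under braid moves: a word is determined by its braid class and
   its commutation class.  Thus t |-> (braid class, commutation class) is
   injective on R(w), and |R(w)| = |B(w)| |C(w)| says that it is onto, which is
   clear when |B(w)| = 1 or |C(w)| = 1.
   Conversely, every w has a reduced word admitting no braid move or admitting
   no commutation move.  It is built from the factorisation of w into descending
   runs s_m ... s_k, merging each new run by a local rewriting that avoids the
   factors i(i+1)i and (i+1)i(i+1); the only obstruction is w = s_i s_(i+1) s_i,
   whose reduced words admit no commutation move.  Such a word is alone in its
   class, and surjectivity of the pairing then leaves a single class of the
   other kind.  Lengths are controlled by counting inversions. *)

Definition swap (i v : nat) : nat :=
  if v == i then i.+1 else if v == i.+1 then i else v.

Lemma swapK i : involutive (swap i).
Proof. by move=> v; rewrite /swap; do ! case: eqP; lia. Qed.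

Lemma swap_comm i j v : i.+1 < j \/ j.+1 < i -> swap i (swap j v) = swap j (swap i v).
Proof. by move=> ?; rewrite /swap; do ! case: eqP; lia. Qed.

Lemma swap_braid i v :
  swap i (swap i.+1 (swap i v)) = swap i.+1 (swap i (swap i.+1 v)).
Proof. by rewrite /swap; do ! case: eqP; lia. Qed.

Lemma ltn_swap i u v : ~~ ((u == i) && (v == i.+1)) -> ~~ ((u == i.+1) && (v == i)) ->
  (swap i u < swap i v) = (u < v).
Proof. by rewrite /swap; do ! case: eqP; lia. Qed.

Lemma swap_l i : swap i i = i.+1.
Proof. by rewrite /swap eqxx. Qed.

Lemma swap_r i : swap i i.+1 = i.
Proof. by rewrite /swap (gtn_eqF (ltnSn i)) eqxx. Qed.

Lemma swap_out i v : v != i -> v != i.+1 -> swap i v = v.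
Proof. by rewrite /swap => /negPf-> /negPf->. Qed.

Lemma swapS_below i : swap i.+1 i = i.
Proof. by rewrite swap_out //; lia. Qed.

Lemma swap_above i : swap i i.+2 = i.+2.
Proof. by rewrite swap_out //; lia. Qed.

Definition swapE := (swap_l, swap_r, swapS_below, swap_above).

(* Letters i >= n act as the identity. *)
Definition adjn (n i : nat) : 'S_n.+1 := if insub i is Some o then adj o else 1%g.

Definition prodn (n : nat) (x : seq nat) : 'S_n.+1 := (\prod_(i <- x) adjn n i)%g.

(* The composite s_(x_1) o ... o s_(x_k); since products in ['S_n.+1] act
   from left to right, it is the underlying map of [prodn n (rev x)]. *)
Definition word_fun (x : seq nat) (v : nat) : nat := foldr swap v x.

Lemma prodw_prodn n (t : seq 'I_n) : prodw t = prodn n (map val t).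
Proof. by rewrite /prodn big_map; apply: eq_bigr => i _; rewrite /adjn valK. Qed.

Lemma prodn_cat n x y : prodn n (x ++ y) = (prodn n x * prodn n y)%g.
Proof. exact: big_cat. Qed.

Lemma prodn_rcons n x i : prodn n (rcons x i) = (prodn n x * adjn n i)%g.
Proof. by rewrite -cats1 prodn_cat /prodn big_seq1. Qed.

Lemma adjnE n i (v : 'I_n.+1) : i < n -> adjn n i v = swap i v :> nat.
Proof.
move=> lt_in; rewrite /adjn insubT /adj /swap /=.
case: tpermP => [->|->|ne1 ne2] /=; first by rewrite eqxx.
  by rewrite (gtn_eqF (ltnSn _)) eqxx.
case: eqP => [e|_]; first by case: ne1; apply: val_inj.
by case: eqP => [e|//]; case: ne2; apply: val_inj.
Qed.

Lemma adjn_out n i : n <= i -> adjn n i = 1%g.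
Proof. by move=> le_ni; rewrite /adjn insubN // -leqNgt. Qed.

Lemma adjnK n i : (adjn n i * adjn n i)%g = 1%g.
Proof.
case: (ltnP i n) => [lt_in|le_ni]; last by rewrite adjn_out ?mulg1.
by apply/permP => v; apply: val_inj; rewrite permM perm1 /= !adjnE // swapK.
Qed.

Lemma prodn_revE n x (v : 'I_n.+1) :
  all (fun i => i < n) x -> prodn n (rev x) v = word_fun x v :> nat.
Proof.
elim: x => [|i x IHx]; first by rewrite /prodn big_nil perm1.
rewrite /= rev_cons => /andP[lt_in /IHx {}IHx].
by rewrite prodn_rcons permM adjnE // IHx.
Qed.

Lemma prodn_rev_eq n x y : all (fun i => i < n) x -> all (fun i => i < n) y ->
  word_fun x =1 word_fun y -> prodn n (rev x) = prodn n (rev y).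
Proof.
by move=> xn yn exy; apply/permP => v; apply: val_inj => /=; rewrite !prodn_revE ?exy.
Qed.

Lemma word_fun_cat x y v : word_fun (x ++ y) v = word_fun x (word_fun y v).
Proof. exact: foldr_cat. Qed.

Lemma word_fun_injective x : injective (word_fun x).
Proof. by elim: x => [|i x IHx] //= u v /(can_inj (swapK i)) /IHx. Qed.

Lemma swap_word_fun_below a D v :
  all (fun b => b.+1 < a) D -> swap a (word_fun D v) = word_fun D (swap a v).
Proof.
elim: D => //= b D IHD /andP[lt_ba /IHD <-].
by rewrite swap_comm //; right.
Qed.

Lemma word_fun_braid i : word_fun [:: i; i.+1; i] =1 word_fun [:: i.+1; i; i.+1].
Proof. exact: swap_braid. Qed.

Lemma word_fun_far i j : i.+1 < j \/ j.+1 < i -> word_fun [:: i; j] =1 word_fun [:: j; i].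
Proof. by move=> far_ij v; apply: swap_comm. Qed.

Lemma iota_rcons k j : iota k j.+1 = iota k j ++ [:: k + j].
Proof. by rewrite -addn1 iotaD. Qed.

Lemma all_iota_lt k j b : k + j <= b -> all (fun a => a < b) (iota k j).
Proof. by move=> le_kjb; apply/allP => a; rewrite mem_iota; lia. Qed.

Lemma word_fun_iota k j v :
  word_fun (iota k j) v = if v == k + j then k else if k <= v < k + j then v.+1 else v.
Proof.
elim: j k => [|j IHj] k /=; first by rewrite addn0; case: eqP => [->|]; rewrite ?ltnNge ?andbN.
by rewrite IHj /swap; repeat case: ifP; repeat case: eqP; lia.
Qed.

Lemma prodn_iotaE n k j (v : 'I_n.+1) : k + j <= n ->
  prodn n (rev (iota k j)) v = word_fun (iota k j) v :> nat.
Proof. by move=> le_n; rewrite prodn_revE // all_iota_lt. Qed.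

(** * Inversions and length *)

Definition inversions n (p : 'S_n.+1) : {set 'I_n.+1 * 'I_n.+1} :=
  [set x : 'I_n.+1 * 'I_n.+1 | (x.1 < x.2) && (p x.2 < p x.1)].

Lemma inversions1 n : inversions (1 : 'S_n.+1)%g = set0.
Proof. by apply/setP => -[x y]; rewrite !inE /= !perm1; case: ltngtP. Qed.

Lemma card_inversions_mul_adj n (p : 'S_n.+1) i (a b : 'I_n.+1) :
  i < n -> a < b -> p a = i :> nat -> p b = i.+1 :> nat ->
  #|inversions (p * adjn n i)%g| = #|inversions p|.+1.
Proof.
move=> lt_in lt_ab pa pb.
have pa_eq z : (p z == i :> nat) = (z == a) by rewrite -pa val_eqE (inj_eq perm_inj).
have pb_eq z : (p z == i.+1 :> nat) = (z == b) by rewrite -pb val_eqE (inj_eq perm_inj).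
suff -> : inversions (p * adjn n i)%g = (a, b) |: inversions p.
  by rewrite cardsU1 !inE /= lt_ab pa pb ltnNge leqnSn.
apply/setP => -[x y]; rewrite !inE.
case: (eqVneq (x, y) (a, b)) => [[-> ->]|ne_xy] /=; rewrite !permM !adjnE //.
  by rewrite lt_ab pa pb swap_l swap_r ltnSn.
case: ltnP => //= lt_xy; apply: ltn_swap; rewrite pa_eq pb_eq.
- by apply: contraTN lt_xy => /andP[/eqP-> /eqP->]; rewrite -leqNgt ltnW.
- by apply: contraNN ne_xy => /andP[/eqP-> /eqP->].
Qed.

Lemma card_inversions_adj n (p : 'S_n.+1) i : i < n ->
  #|inversions (p * adjn n i)%g| = #|inversions p|.+1 \/
  #|inversions p| = #|inversions (p * adjn n i)%g|.+1.
Proof.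
move=> lt_in; pose a := (p^-1)%g (inord i); pose b := (p^-1)%g (inord i.+1).
have pa : p a = i :> nat by rewrite permKV inordK // ltnW.
have pb : p b = i.+1 :> nat by rewrite permKV inordK.
have [lt_ab|lt_ba|/val_inj eq_ab] := ltngtP a b.
- by left; apply: card_inversions_mul_adj pa pb.
- right; set q := (p * adjn n i)%g.
  have <- : (q * adjn n i)%g = p by rewrite -mulgA adjnK mulg1.
  by apply: card_inversions_mul_adj lt_ba _ _ => //; rewrite permM adjnE // ?pb ?pa swapE.
- by move: pb; rewrite -eq_ab pa => /n_Sn.
Qed.

Lemma card_inversions_prodn n x : #|inversions (prodn n x)| <= size x.
Proof.
elim/last_ind: x => [|x i IHx]; first by rewrite /prodn big_nil inversions1 cards0.
rewrite prodn_rcons size_rcons; case: (ltnP i n) => [lt_in|le_ni].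
  by case: (card_inversions_adj (prodn n x) lt_in); lia.
by rewrite adjn_out // mulg1 ltnW.
Qed.

Lemma reduced_no_repeat n u a v :
  #|inversions (prodn n (u ++ a :: a :: v))| < size (u ++ a :: a :: v).
Proof.
have -> : prodn n (u ++ a :: a :: v) = prodn n (u ++ v).
  by rewrite !prodn_cat; congr (_ * _)%g; rewrite /prodn !big_cons mulgA adjnK mul1g.
apply: leq_ltn_trans (card_inversions_prodn n (u ++ v)) _.
by rewrite !size_cat /=; lia.
Qed.

Lemma reduced_rev_norep n r : size r = #|inversions (prodn n (rev r))| ->
  forall a s, r <> [:: a, a & s].
Proof.
move=> size_r a s eq_r; have := reduced_no_repeat n (rev s) a [::].
have -> : rev s ++ [:: a, a & [::]] = rev r by rewrite eq_r !rev_cons -!cats1 -catA.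
by rewrite size_rev size_r ltnn.
Qed.

Lemma word_tuple n k x : size x = k -> all (fun i => i < n) x ->
  exists t : k.-tuple 'I_n, map val t = x.
Proof.
move=> size_x lt_x; have val_pmap : map val (pmap insub x : seq 'I_n) = x.
  by elim: x {size_x} lt_x => //= i x IHx /andP[lt_i /IHx]; rewrite insubT /= => ->.
have size_pmap : size (pmap insub x : seq 'I_n) == k by rewrite -(size_map val) val_pmap size_x.
by exists (Tuple size_pmap).
Qed.

Lemma card_inversions_le_word n (w : 'S_n.+1) j : has_word w j -> #|inversions w| <= j.
Proof.
case=> t <-; rewrite prodw_prodn; have := card_inversions_prodn n (map val t).
by rewrite size_map size_tuple.
Qed.

Lemma ell_eq_card_inversions n (w : 'S_n.+1) x : prodn n x = w ->
  size x = #|inversions w| -> all (fun i => i < n) x -> ell w = #|inversions w|.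
Proof.
move=> xE size_x lt_x; have [t tE] := word_tuple size_x lt_x.
have w_word : has_word w #|inversions w| by exists t; rewrite prodw_prodn tE.
have ell_spec : exists j, has_word w j /\ forall j', has_word w j' -> j <= j'.
  by exists #|inversions w|; split=> // j; apply: card_inversions_le_word.
have [/card_inversions_le_word le_inv_ell ell_min] := epsilon_spec (inhabits 0) _ ell_spec.
by apply/eqP; rewrite eqn_leq ell_min.
Qed.

Lemma card_inversions_mul_iota n m (q : 'S_n.+1) k L : m < n ->
  (forall v : 'I_n.+1, m < v -> q v = v) -> k + L = m.+1 ->
  #|inversions (q * prodn n (rev (iota k L)))%g| = #|inversions q| + L.
Proof.
move=> lt_mn q_fix; elim: L k => [|L IHL] k eq_m; first by rewrite /prodn big_nil mulg1 addn0.
rewrite /= rev_cons prodn_rcons mulgA addnS -(IHL k.+1); last lia.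
pose a := (q^-1)%g (inord k); pose b : 'I_n.+1 := inord m.+1.
have qa : q a = k :> nat by rewrite permKV inordK //; lia.
have vb : b = m.+1 :> nat by rewrite inordK.
have le_am : a <= m by rewrite leqNgt; apply/negP => lt_ma; move: qa; rewrite q_fix //; lia.
apply: (@card_inversions_mul_adj _ _ _ a b); first lia.
- by rewrite vb ltnS.
- rewrite permM prodn_iotaE ?qa ?word_fun_iota; last lia.
  by do ?case: ifP; lia.
rewrite permM (q_fix b) ?vb // prodn_iotaE ?vb ?word_fun_iota; last lia.
by do ?case: ifP; lia.
Qed.

Lemma perm_fix_gt0 n (p : 'S_n.+1) : (forall v : 'I_n.+1, 0 < v -> p v = v) -> p = 1%g.
Proof.
move=> p_fix; apply/permP => v; rewrite perm1; case: (posnP v) => [v0|]; last exact: p_fix.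
have [pv0|] := posnP (p v); first by apply: val_inj => /=; rewrite pv0 v0.
by move=> /p_fix /perm_inj.
Qed.

Lemma exists_run_factor n m (p : 'S_n.+1) : m < n ->
  (forall v : 'I_n.+1, m.+1 < v -> p v = v) ->
  exists2 k, k <= m.+1 &
    forall v : 'I_n.+1, m < v -> (p * (prodn n (rev (iota k (m.+1 - k))))^-1)%g v = v.
Proof.
move=> lt_mn p_fix; pose M : 'I_n.+1 := inord m.+1.
have vM : M = m.+1 :> nat by rewrite inordK.
have le_pM : p M <= m.+1.
  rewrite leqNgt; apply/negP => lt_mk.
  by move: (p_fix (p M) lt_mk) => /perm_inj eq_pM; move: lt_mk; rewrite eq_pM vM ltnn.
exists (p M) => // v lt_mv; set ch := prodn n _.
apply: (@perm_inj _ ch); rewrite permM permKV; apply: val_inj => /=.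
rewrite prodn_iotaE ?word_fun_iota; last lia.
case: ifP => [/eqP eq_v|/negbT ne_v].
  by rewrite (_ : v = M) //; apply: val_inj => /=; rewrite vM eq_v; lia.
have lt_v : m.+1 < v by lia.
by rewrite (p_fix v lt_v) ifN //; lia.
Qed.

(** * Reduced words without braid moves *)

Definition braid_triple (a b c : nat) : bool := (a == c) && ((b == a.+1) || (a == b.+1)).

Fixpoint braid_free (s : seq nat) : bool :=
  if s is a :: s' then
    (if s' is b :: c :: _ then ~~ braid_triple a b c else true) && braid_free s'
  else true.

Lemma braid_free_cons a b c s :
  braid_free [:: a, b, c & s] = ~~ braid_triple a b c && braid_free [:: b, c & s].
Proof. by []. Qed.

Lemma braid_free_cons2 a b s :
  braid_free [:: a, b & s] = ~~ braid_triple a b (head b s) && braid_free (b :: s).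
Proof. by case: s => [|c s] //=; rewrite /braid_triple; case: eqP; lia. Qed.

Lemma braid_free_behead a s : braid_free (a :: s) -> braid_free s.
Proof. by case: s => [|b [|c s]] //= /andP[]. Qed.

Lemma braid_free_cons_gt a s :
  all (fun b => b < a) s -> braid_free s -> braid_free (a :: s).
Proof. by case: s => [|b [|c s]] //= /and3P[_ lt_ca _] ->; rewrite /braid_triple; lia. Qed.

Lemma braid_free_iota_cat k j s :
  braid_free (iota k j.+2 ++ s) = braid_free ([:: k + j; (k + j).+1] ++ s).
Proof.
elim: j k => [|j IHj] k; first by rewrite addn0.
rewrite -[iota k j.+3 ++ s]/[:: k, k.+1, k.+2 & iota k.+3 j ++ s] braid_free_cons.
rewrite -[[:: k.+1, _ & _]]/(iota k.+1 j.+2 ++ s) IHj addSnnS.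
by rewrite /braid_triple eq_sym (gtn_eqF (leqW (ltnSn k))).
Qed.

Lemma braid_free_cons_iota a k j s :
  braid_free (a :: iota k j.+2 ++ s) = (a != k.+1) && braid_free (iota k j.+2 ++ s).
Proof.
rewrite -[iota k j.+2 ++ s]/[:: k, k.+1 & iota k.+2 j ++ s] braid_free_cons.
by rewrite /braid_triple; case: eqP => [->|]; rewrite ?eqxx ?orbT.
Qed.

Lemma braid_free_cat_triple x y a b c :
  braid_triple a b c -> braid_free (x ++ [:: a, b, c & y]) = false.
Proof. by move=> abc; elim: x => [|d x IHx] /=; rewrite ?abc ?IHx ?andbF. Qed.

Lemma braid_free_rev_stuck r y : braid_free r -> ~ braid_step (rev r) y.
Proof.
move=> bf_r [a [b [i [[eq_r _]|[eq_r _]]]]]; move: bf_r;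
  rewrite -[r]revK eq_r !rev_cat -catA braid_free_cat_triple // /braid_triple; lia.
Qed.

(* The only reduced words of s_i s_(i+1) s_i are i(i+1)i and (i+1)i(i+1), so
   this exception cannot be avoided; such a word admits no commutation move. *)
Definition almost_braid_free (r : seq nat) : Prop :=
  braid_free r \/ exists i, r = [:: i; i.+1; i].

(* Reduced words are built reversed, by prepending the run [k; ...; k + L - 1],
   i.e. multiplying the permutation on the right by s_(k+L-1) ... s_k; [r2] is a
   rewriting of the run followed by [r] that is again almost braid free. *)
Definition extension k L (r r2 : seq nat) : Prop :=
  [/\ word_fun r2 =1 word_fun (iota k L ++ r), size r2 = L + size r,
      all (fun a => a < k + L) r2 & almost_braid_free r2].

Lemma extension_nil k r : all (fun a => a < k) r -> almost_braid_free r -> extension k 0 r r.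
Proof. by move=> lt_rk; split=> //; rewrite addn0. Qed.

Lemma extension_braid_free1 k r :
  all (fun a => a < k) r -> braid_free r -> extension k 1 r (k :: r).
Proof.
move=> lt_rk bf_r; split=> //=; first by rewrite addn1 ltnSn; apply: sub_all lt_rk => a /ltnW.
by left; apply: braid_free_cons_gt.
Qed.

(* The default of [head] makes the last hypothesis hold for empty [r]. *)
Lemma extension_braid_free k j r : all (fun a => a < (k + j).+1) r -> braid_free r ->
  head (k + j).+1 r != k + j -> extension k j.+2 r (iota k j.+2 ++ r).
Proof.
move=> lt_r bf_r r_head; split=> //.
- by rewrite size_cat size_iota /=; lia.
- by rewrite all_cat all_iota_lt //=; apply: sub_all lt_r => a /=; lia.
left; rewrite braid_free_iota_cat braid_free_cons2 (braid_free_cons_gt lt_r bf_r) andbT.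
by case: r r_head {lt_r bf_r} => [|a r] /=; rewrite /braid_triple; lia.
Qed.

Lemma extension_braid k j s : all (fun a => a < (k + j).+2) s -> braid_free s ->
  head (k + j).+2 s != (k + j).+1 ->
  extension k j.+3 ((k + j).+1 :: s) ((k + j).+2 :: iota k j.+2 ++ (k + j).+2 :: s).
Proof.
move=> lt_s bf_s s_head; split.
- have eq2 : iota k j.+2 = iota k j.+1 ++ [:: (k + j).+1] by rewrite -addn1 iotaD addnS.
  have eq3 : iota k j.+3 = iota k j.+1 ++ [:: (k + j).+1; (k + j).+2].
    by rewrite -addn2 iotaD addnS.
  move=> v; rewrite eq2 eq3.
  have := @all_iota_lt k j.+1 (k + j).+1 (eq_leq (addnS k j)).
  move: (iota k j.+1) => D lt_D.
  by rewrite /= -catA !word_fun_cat /= swap_word_fun_below ?swap_braid.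
- by rewrite /= size_cat size_iota /=; lia.
- have lt_s' : all (fun a => a < k + j.+3) s by apply: sub_all lt_s => a /=; lia.
  by rewrite /= all_cat all_iota_lt /= ?lt_s' ?andbT; lia.
left; rewrite braid_free_cons_iota braid_free_iota_cat !braid_free_cons2.
by rewrite (braid_free_cons_gt lt_s bf_s) /braid_triple /=; lia.
Qed.

Lemma extension_braid3 k : extension k 2 [:: k] [:: k; k.+1; k].
Proof. by split=> //=; [lia | right; exists k]. Qed.

Lemma extension_braid_far k a s : a < k -> all (fun b => b < k.+1) s -> braid_free s ->
  extension k 2 [:: k, a & s] [:: k.+1, k, a, k.+1 & s].
Proof.
move=> lt_ak lt_s bf_s; split.
- by move=> v /=; rewrite (@swap_comm a k.+1) ?swap_braid //; left.
- by [].
- rewrite /= (sub_all _ lt_s) ?andbT; first lia.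
  by move=> b /=; lia.
left; rewrite !braid_free_cons2 (braid_free_cons_gt lt_s bf_s) /braid_triple /=; lia.
Qed.

Lemma extension_braid3_far k i : i.+1 < k ->
  extension k 1 [:: i; i.+1; i] [:: i; k; i.+1; i].
Proof.
move=> lt_ik; split=> //=.
- by move=> v /=; rewrite swap_comm //; left.
- lia.
left; rewrite /= /braid_triple; lia.
Qed.

Lemma extension_braid3_run k j i : i.+1 < k + j ->
  extension k j.+2 [:: i; i.+1; i] (iota k j.+1 ++ [:: i; (k + j).+1; i.+1; i]).
Proof.
move=> lt_i; split.
- move=> v; rewrite (iota_rcons k j.+1) -catA !word_fun_cat /= addnS swap_comm //; left; lia.
- by rewrite size_cat size_iota /=; lia.
- rewrite all_cat all_iota_lt /=; lia.
left; case: j lt_i => [|j] lt_i; first by rewrite /= /braid_triple; lia.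
by rewrite braid_free_iota_cat /= /braid_triple; lia.
Qed.

Lemma extension_braid3_top k j i : k + j = i.+1 ->
  extension k j.+2 [:: i; i.+1; i] (iota k j ++ [:: i.+2; i.+1; i; i.+2; i.+1]).
Proof.
move=> eq_kj; split.
- move=> v; rewrite !iota_rcons -!catA !word_fun_cat addnS eq_kj /=.
  by rewrite swap_braid swap_braid (@swap_comm i.+2 i) //; right.
- by rewrite size_cat size_iota /=; lia.
- rewrite all_cat all_iota_lt /=; lia.
left; case: j eq_kj => [|[|j]] eq_kj; rewrite ?braid_free_iota_cat /= /braid_triple; lia.
Qed.

Lemma head_neq_norep a s : (forall b s', a :: s <> [:: b, b & s']) -> head a.+1 s != a.
Proof.
case: s => [|b s] norep /=; first by rewrite (gtn_eqF (ltnSn a)).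
by apply/eqP => eq_ba; apply: (norep a s); rewrite eq_ba.
Qed.

Lemma extension_exists_braid_free k j r : all (fun a => a < (k + j).+1) r ->
  braid_free r -> (forall a s, r <> [:: a, a & s]) -> exists r2, extension k j.+2 r r2.
Proof.
move=> lt_r bf_r norep.
have [[s eq_r]|r_head] : (exists s, r = k + j :: s) \/ head (k + j).+1 r != k + j.
- case: r {lt_r bf_r norep} => [|a s] /=; first by right; lia.
  by case: eqP => [->|]; [left; exists s | right].
- subst r; have s_head := head_neq_norep norep.
  move: lt_r => /= /andP[_ lt_s]; have bf_s := braid_free_behead bf_r.
  case: j s_head lt_s {bf_r norep} => [|j] s_head lt_s.
    rewrite addn0 in s_head lt_s *; case: s s_head lt_s bf_s => [|a s] s_head.
      by exists [:: k; k.+1; k]; apply: extension_braid3.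
    move=> /= /andP[lt_a lt_s] bf_s; exists [:: k.+1, k, a, k.+1 & s].
    by apply: extension_braid_far (braid_free_behead bf_s) => //; move: s_head => /=; lia.
  by rewrite addnS in s_head lt_s *; eexists; apply: extension_braid.
by eexists; apply: extension_braid_free.
Qed.

Lemma extension_exists m k r : k <= m.+1 -> all (fun a => a < m) r ->
  (forall a s, r <> [:: a, a & s]) -> almost_braid_free r ->
  exists r2, extension k (m.+1 - k) r r2.
Proof.
move=> le_km lt_r norep abf_r; case eq_L: (m.+1 - k) => [|[|j]].
- exists r; apply: extension_nil abf_r; apply: sub_all lt_r => a /=; lia.
- have -> : k = m by lia.
  case: abf_r => [bf_r|[i eq_r]]; first by exists (m :: r); apply: extension_braid_free1.
  exists [:: i; m; i.+1; i]; rewrite eq_r; apply: extension_braid3_far.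
  by move: lt_r; rewrite eq_r /=; lia.
have eq_m : m = (k + j).+1 by lia.
rewrite {}eq_m in lt_r; case: abf_r => [bf_r|[i eq_r]].
  exact: extension_exists_braid_free.
rewrite {}eq_r /= in lt_r *; have [lt_i|ge_i] := ltnP i.+1 (k + j).
  by eexists; apply: extension_braid3_run.
by eexists; apply: extension_braid3_top; lia.
Qed.

Lemma exists_rev_reduced_word n m (p : 'S_n.+1) :
  m <= n -> (forall v : 'I_n.+1, m < v -> p v = v) ->
  exists r, [/\ prodn n (rev r) = p, size r = #|inversions p|,
                all (fun a => a < m) r & almost_braid_free r].
Proof.
elim: m p => [|m IHm] p le_mn p_fix.
  exists [::]; rewrite (perm_fix_gt0 p_fix) inversions1 cards0.
  by split=> //; [rewrite /prodn big_nil | left].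
have [k le_km] := exists_run_factor le_mn p_fix.
set ch := prodn n _; set p' := (p * ch^-1)%g => p'_fix.
have [r' [r'E size_r' lt_r' abf_r']] := IHm p' (ltnW le_mn) p'_fix.
have pE : p = (p' * ch)%g by rewrite mulgKV.
have norep := @reduced_rev_norep n r'; rewrite r'E in norep.
have [r [r_fun size_r lt_r abf_r]] := extension_exists le_km lt_r' (norep size_r') abf_r'.
rewrite subnKC // in lt_r; exists r; split=> //.
- rewrite pE -r'E /ch -prodn_cat -rev_cat; apply: prodn_rev_eq r_fun.
    by apply: sub_all lt_r => a /=; lia.
  rewrite all_cat all_iota_lt ?subnKC //=; apply: sub_all lt_r' => a /=; lia.
by rewrite size_r pE (@card_inversions_mul_iota _ m) ?subnKC // size_r' addnC.
Qed.

Lemma comm_step_braid3 i y : ~ comm_step [:: i; i.+1; i] y.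
Proof.
case=> a [b [u [v [far [eq_x _]]]]].
case: a eq_x => [|? [|? [|? a]]] //= [] => [eu ev _|_ eu ev _|_ _ _ /(congr1 size)];
  rewrite ?size_cat /=; lia.
Qed.

Lemma exists_stuck_reduced_word n (w : 'S_n.+1) : exists x, [/\ prodn n x = w,
  size x = ell w, all (fun i => i < n) x &
  (forall y, ~ braid_step x y) \/ (forall y, ~ comm_step x y)].
Proof.
have [|r [rE size_r lt_r abf_r]] := @exists_rev_reduced_word n n w (leqnn n).
  by move=> v; rewrite ltnNge -ltnS ltn_ord.
have lt_rev : all (fun i => i < n) (rev r) by rewrite all_rev.
exists (rev r); split=> //.
  by rewrite (ell_eq_card_inversions rE) // size_rev.
case: abf_r => [bf_r|[i ->]]; first by left=> y; apply: braid_free_rev_stuck.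
by right=> y; apply: comm_step_braid3.
Qed.

(** * A braid class and a commutation class share at most one word *)

Fixpoint trail (P : nat -> nat) (x : seq nat) : seq (nat * nat) :=
  if x is i :: x' then (P i, P i.+1) :: trail (P \o swap i) x' else [::].

Lemma trail_ext x P Q : P =1 Q -> trail P x = trail Q x.
Proof.
elim: x P Q => [|i x IHx] P Q eqPQ //=.
by rewrite !eqPQ; congr (_ :: _); apply: IHx => v; apply: eqPQ.
Qed.

Lemma trail_cat P x y : trail P (x ++ y) = trail P x ++ trail (P \o word_fun x) y.
Proof. by elim: x P => [|i x IHx] P //=; rewrite IHx. Qed.

Lemma trail_inj P : injective P -> injective (trail P).
Proof.
move=> injP x y; elim: x y P injP => [|i x IHx] [|j y] P injP //= [/injP <- _].
by move/IHx=> -> //; apply: inj_comp injP (can_inj (swapK i)).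
Qed.

Definition meets (u v : nat * nat) : bool :=
  [|| u.1 == v.1, u.1 == v.2, u.2 == v.1 | u.2 == v.2].

Lemma meetsC : symmetric meets.
Proof. by move=> u v; rewrite /meets ![_ == u.1]eq_sym ![_ == u.2]eq_sym; do 4 case: eqP. Qed.

Lemma pred2_meets_eq s t u v : ~~ meets s t ->
  pred2 s t u -> pred2 s t v -> meets u v -> u = v.
Proof.
by move=> st /pred2P[]-> /pred2P[]-> //; rewrite ?(meetsC t) (negPf st).
Qed.

Lemma filter_trail_rev_block P l l' b s t : word_fun l =1 word_fun l' ->
  trail P l' = rev (trail P l) -> constant (filter (pred2 s t) (trail P l)) ->
  filter (pred2 s t) (trail P (l ++ b)) = filter (pred2 s t) (trail P (l' ++ b)).
Proof.
move=> eq_l eq_trail /(constantP (0, 0))[u eq_u].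
rewrite !trail_cat !filter_cat eq_trail filter_rev eq_u rev_nseq; congr (_ ++ _).
by congr filter; apply: trail_ext => v /=; rewrite eq_l.
Qed.

Lemma trail_braid P i :
  trail P [:: i; i.+1; i] = [:: (P i, P i.+1); (P i, P i.+2); (P i.+1, P i.+2)].
Proof. by rewrite /= !swapE. Qed.

Lemma trail_braid_rev P i : trail P [:: i.+1; i; i.+1] = rev (trail P [:: i; i.+1; i]).
Proof. by rewrite /= !swapE. Qed.

Lemma trail_far P i j : i.+1 < j \/ j.+1 < i ->
  trail P [:: i; j] = [:: (P i, P i.+1); (P j, P j.+1)].
Proof. by move=> far_ij; rewrite /= !swap_out //; lia. Qed.

Lemma constant_filter_pred2_meets s t l : ~~ meets s t -> pairwise meets l ->
  constant (filter (pred2 s t) l).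
Proof.
move=> st; elim: l => //= u l IHl /andP[ul /IHl{}IHl]; case: ifP => //= su.
apply/allP => v; rewrite mem_filter => /andP[sv vl]; apply/eqP.
by apply: pred2_meets_eq st sv su _; rewrite meetsC (allP ul).
Qed.

Lemma constant_filter_pred2_far s t u v : meets s t -> ~~ meets u v ->
  constant (filter (pred2 s t) [:: u; v]).
Proof.
move=> st /=; case: pred2P => [su|_]; case: pred2P => [sv|_] //=; rewrite andbT.
by case: su sv => -> [] ->; rewrite ?eqxx ?(meetsC t) ?st.
Qed.

Lemma filter_trail_braid_step P s t x y : injective P -> ~~ meets s t ->
  braid_step x y -> filter (pred2 s t) (trail P x) = filter (pred2 s t) (trail P y).
Proof.
move=> injP st [a [b [i eq_xy]]].
suff block : filter (pred2 s t) (trail (P \o word_fun a) ([:: i; i.+1; i] ++ b)) =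
             filter (pred2 s t) (trail (P \o word_fun a) ([:: i.+1; i; i.+1] ++ b)).
  by case: eq_xy => -[-> ->]; rewrite !(trail_cat P a) !filter_cat block.
apply: filter_trail_rev_block; [exact: word_fun_braid | exact: trail_braid_rev |].
apply: constant_filter_pred2_meets st _; rewrite trail_braid /= /meets /=.
by rewrite !eqxx !orbT.
Qed.

Lemma filter_trail_comm_step P s t x y : injective P -> meets s t ->
  comm_step x y -> filter (pred2 s t) (trail P x) = filter (pred2 s t) (trail P y).
Proof.
move=> injP st [a [b [i [j [far_ij [-> ->]]]]]]; rewrite !(trail_cat P a) !filter_cat.
congr (_ ++ _); apply: filter_trail_rev_block; first exact: word_fun_far.
  by rewrite !trail_far //; case: far_ij; [right | left].
have injQ : injective (P \o word_fun a) := inj_comp injP (@word_fun_injective a).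
rewrite trail_far //; apply: constant_filter_pred2_far st _.
by rewrite /meets /= !(inj_eq injQ); apply/norP; do ! split; apply/eqP; lia.
Qed.

Lemma clos_refl_trans_inv T U (f : T -> U) (r : relation T) :
  (forall x y, r x y -> f x = f y) -> forall x y, clos_refl_trans _ r x y -> f x = f y.
Proof. by move=> fr x y; elim=> [||u v w _ -> _ ->] //; apply: fr. Qed.

Lemma filter_pred2_inj (T : eqType) (l1 l2 : seq T) :
  (forall s t, filter (pred2 s t) l1 = filter (pred2 s t) l2) -> l1 = l2.
Proof.
elim: l1 l2 => [|u l1 IHl] [|v l2] eq_l //.
- by have := eq_l v v; rewrite /= eqxx.
- by have := eq_l u u; rewrite /= eqxx.
have := eq_l u v; rewrite /= !eqxx orbT /= => -[uv _]; subst v; congr (_ :: _); apply: IHl => s t.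
by have := eq_l s t; rewrite /=; case: ifP => _ // [].
Qed.

Lemma braid_comm_equiv_eq x y : braid_equiv x y -> comm_equiv x y -> x = y.
Proof.
move=> bxy cxy; apply: (@trail_inj id) => //; apply: filter_pred2_inj => s t.
have [st|st] := boolP (meets s t).
  by apply: (clos_refl_trans_inv (f := fun x => filter _ (trail id x))) cxy => u v;
     apply: filter_trail_comm_step.
by apply: (clos_refl_trans_inv (f := fun x => filter _ (trail id x))) bxy => u v;
   apply: filter_trail_braid_step.
Qed.

(** * Counting classes *)

Lemma pbP (P : Prop) : reflect P (pb P).
Proof. by rewrite /pb; case: excluded_middle_informative => h; constructor. Qed.

Lemma clos_rt_equivalence T (r : relation T) :
  (forall x y, r x y -> r y x) -> equivalence T (clos_refl_trans _ r).
Proof.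
move=> r_sym; have [refl trans] := clos_rt_is_preorder _ r.
split=> // x y; elim=> [u v ruv|u|u v w _ vu _ wv].
- exact: rt_step (r_sym _ _ ruv).
- exact: refl.
- exact: trans wv vu.
Qed.

Section Classes.

Variables (n k : nat) (A : {set k.-tuple 'I_n}).

Let word (t : k.-tuple 'I_n) : seq nat := map val (tval t).

Lemma word_inj : injective word.
Proof. by move=> t u /(inj_map val_inj)/val_inj. Qed.

Definition class_of (e : relation (seq nat)) (t : k.-tuple 'I_n) :=
  [set u in A | pb (e (word t) (word u))].

Lemma classesE e : Defs.classes A e = class_of e @: A.
Proof. by []. Qed.

Lemma class_of_eq e t u : equivalence _ e -> t \in A -> u \in A ->
  class_of e t = class_of e u <-> e (word t) (word u).
Proof.
case=> refl trans sym tA uA; split=> [eq_tu|etu].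
  have : u \in class_of e u by rewrite inE uA; apply/pbP.
  by rewrite -eq_tu inE => /andP[_ /pbP].
apply/setP => v; rewrite !inE; case: (v \in A) => //=.
by apply/pbP/pbP => [etv|euv]; [apply: trans (sym _ _ etu) etv | apply: trans etu euv].
Qed.

Variables e1 e2 : relation (seq nat).
Hypotheses (equiv_e1 : equivalence _ e1) (equiv_e2 : equivalence _ e2).
Hypothesis e1_e2_eq : forall x y, e1 x y -> e2 x y -> x = y.

Lemma card_classes_single_class :
  #|Defs.classes A e1| = 1 -> #|A| = #|Defs.classes A e1| * #|Defs.classes A e2|.
Proof.
move=> /eqP/cards1P[X eqX]; rewrite eqX cards1 mul1n classesE card_in_imset //.
move=> t u tA uA /(class_of_eq equiv_e2 tA uA) e2tu; apply: word_inj.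
apply: e1_e2_eq e2tu; apply/(class_of_eq equiv_e1 tA uA).
have: class_of e1 t \in [set X] by rewrite -eqX imset_f.
have: class_of e1 u \in [set X] by rewrite -eqX imset_f.
by rewrite !inE => /eqP-> /eqP->.
Qed.

(* The pairing t |-> (e1-class, e2-class) is injective, hence onto by counting,
   so every e2-class meets the singleton e1-class of z. *)
Lemma card_classes_isolated z : z \in A ->
  (forall y, e1 (word z) y -> y = word z) ->
  #|A| = #|Defs.classes A e1| * #|Defs.classes A e2| -> #|Defs.classes A e2| = 1.
Proof.
move=> zA z_iso cardA; pose pair t := (class_of e1 t, class_of e2 t).
have pair_inj : {in A &, injective pair}.
  move=> t u tA uA [/(class_of_eq equiv_e1 tA uA) e1tu /(class_of_eq equiv_e2 tA uA)].
  by move/(e1_e2_eq e1tu)/word_inj.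
have pairA : pair @: A = setX (Defs.classes A e1) (Defs.classes A e2).
  apply/eqP; rewrite eqEcard cardsX -cardA card_in_imset // leqnn andbT.
  by apply/subsetP => _ /imsetP[t tA ->]; rewrite inE; apply/andP; split; apply: imset_f.
suff -> : Defs.classes A e2 = [set class_of e2 z] by rewrite cards1.
apply/eqP; rewrite eqEsubset sub1set; apply/andP; split; last exact: imset_f.
apply/subsetP => c c_cls.
have : (class_of e1 z, c) \in pair @: A.
  by rewrite pairA inE c_cls andbT; apply: imset_f.
case/imsetP=> u uA [/(class_of_eq equiv_e1 zA uA)/z_iso/word_inj -> ->].
by rewrite inE.
Qed.

End Classes.

Lemma braid_step_sym x y : braid_step x y -> braid_step y x.
Proof. by case=> a [b [i [[-> ->]|[-> ->]]]]; exists a, b, i; [right | left]. Qed.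

Lemma comm_step_sym x y : comm_step x y -> comm_step y x.
Proof.
by case=> a [b [i [j [far [-> ->]]]]]; exists a, b, j, i; split=> //; case: far; [right | left].
Qed.

Lemma clos_rt_stuck T (r : relation T) x y :
  (forall z, ~ r x z) -> clos_refl_trans _ r x y -> x = y.
Proof. by move=> x_stuck /clos_rt_rt1n_iff[|z w /x_stuck]. Qed.

Theorem proposition4p8 (n : nat) (w : 'S_n.+1) :
  #|Rw w| = (#|Bw w| * #|Cw w|)%N <-> #|Bw w| = 1%N \/ #|Cw w| = 1%N.
Proof.
have equivB := clos_rt_equivalence braid_step_sym.
have equivC := clos_rt_equivalence comm_step_sym.
have comm_braid_eq x y cxy bxy := @braid_comm_equiv_eq x y bxy cxy.
split=> [cardR|[cardB|cardC]].
- have [x [xE size_x lt_x x_stuck]] := exists_stuck_reduced_word w.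
  have [t tE] := word_tuple size_x lt_x.
  have tR : t \in Rw w by rewrite inE prodw_prodn tE xE.
  case: x_stuck => [b_stuck|c_stuck].
    right; apply: (card_classes_isolated equivB equivC braid_comm_equiv_eq tR) cardR.
    by rewrite tE => y /(clos_rt_stuck b_stuck).
  left; rewrite mulnC in cardR.
  apply: (card_classes_isolated equivC equivB comm_braid_eq tR) cardR.
  by rewrite tE => y /(clos_rt_stuck c_stuck).
- exact: card_classes_single_class equivB equivC braid_comm_equiv_eq cardB.
by rewrite mulnC; apply: card_classes_single_class equivC equivB comm_braid_eq cardC.
Qed.
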